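(* For $c>0$ and $t\ge 0$ let $$l(c,t)=\begin{cases}\dfrac{t}{t+1}\log c+\dfrac t2, & c\ge 1,\\[2mm] \dfrac{ct}{2}, & 0<c\le 1,\end{cases}\qquad u(c,t)=\min\Big\{\log\Big(c+\frac{1}{4c}\Big)+\frac t2,\ \log(1+ct)+c(e^t-1)\Big\}.$$ Then for all $t>0$ and $c>0$, $$l(c,t)<\log\Big(1+2c\sinh\frac t2\Big)\le u(c,t).$$ Moreover, for $t>0$ and $c>0$, equality holds in the upper bound if and only if $c>\frac12$ and $t=2\log(2c)$. *)

From Stdlib Require Import Reals.
Open Scope R_scope.

(* l(c,t): case c >= 1 uses the first formula, otherwise (0<c<1) the second;
   both agree at c = 1. *)
Definition lfun (c t : R) : R :=
  if Rle_dec 1 c then t / (t + 1) * ln c + t / 2 else c * t / 2.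

Definition ufun (c t : R) : R :=
  Rmin (ln (c + 1 / (4 * c)) + t / 2) (ln (1 + c * t) + c * (exp t - 1)).

(* Put x = exp (t/2) > 1, so that 1 + 2 c sinh (t/2) = 1 + c (x - 1/x).
   The first upper bound is the identity
   (c + 1/(4c)) x - (1 + c (x - 1/x)) = (x - 2c)^2 / (4 c x),
   whose right-hand side vanishes exactly when x = 2c.  The second one is strict
   because c (x - 1/x) < c (x^2 - 1) = c (e^t - 1) <= exp (c (e^t - 1)) - 1
   when x > 1.
   The lower bound is concavity of ln: for a weight a in [0, 1],
   a ln c + ln x <= ln ((a c + 1 - a) x), and (a c + 1 - a) x < 1 + c (x - 1/x)
   for a = t/(t+1) when c >= 1 (using e^t >= 1 + t) and for a = c when c <= 1. *)
From Stdlib Require Import Reals Lra Psatz.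
Open Scope R_scope.

Lemma ln_le (x y : R) : 0 < x -> x <= y -> ln x <= ln y.
Proof.
  intros hx [hlt | ->].
  - now left; apply ln_increasing.
  - now right.
Qed.

Lemma ln_le_sub_1 (y : R) : 0 < y -> ln y <= y - 1.
Proof.
  intros hy.
  pose proof (exp_ineq1_le (ln y)) as h.
  rewrite exp_ln in h by exact hy.
  lra.
Qed.

Lemma ln_concave_1 (a y : R) :
  0 <= a <= 1 -> 0 < y -> a * ln y <= ln (a * y + 1 - a).
Proof.
  intros ha hy.
  set (m := a * y + 1 - a).
  assert (hm : 0 < m) by (unfold m; nra).
  (* tangent line of ln at m, evaluated at y and at 1 *)
  assert (hy_m : ln (y * / m) <= y / m - 1)
    by (apply ln_le_sub_1, Rdiv_lt_0_compat; assumption).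
  assert (h1_m : ln (/ m) <= / m - 1)
    by (apply ln_le_sub_1, Rinv_0_lt_compat, hm).
  rewrite ln_mult, ln_Rinv in hy_m by (auto with real).
  rewrite ln_Rinv in h1_m by exact hm.
  assert (hmean : a * (y / m - 1) + (1 - a) * (/ m - 1) = 0).
  { unfold m in *; field; lra. }
  nra.
Qed.

Lemma two_sinh_exp (y : R) : 2 * sinh y = exp y - / exp y.
Proof.
  unfold sinh; rewrite exp_Ropp; field; apply exp_neq_0.
Qed.

Lemma exp_half_eq_iff (c t : R) :
  0 < t -> (exp (t / 2) = 2 * c <-> 1 / 2 < c /\ t = 2 * ln (2 * c)).
Proof.
  intros ht; split.
  - intros hx.
    assert (h1 : 1 < exp (t / 2)) by (pose proof (exp_ineq1 (t / 2)); lra).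
    split; [lra |].
    rewrite <- hx, ln_exp; field.
  - intros [hc ->].
    replace (2 * ln (2 * c) / 2) with (ln (2 * c)) by field.
    apply exp_ln; lra.
Qed.

Lemma eq_Rmin_l_iff (y a b : R) : y <= a -> y < b -> (y = Rmin a b <-> y = a).
Proof.
  intros ha hb; unfold Rmin; destruct (Rle_dec a b); split; lra.
Qed.

Section SinhForm.

Variables c x : R.
Hypothesis hc : 0 < c.
Hypothesis hx : 1 < x.

Lemma inv_lt_1 : / x < 1.
Proof.
  rewrite <- Rinv_1; apply Rinv_lt_contravar; lra.
Qed.

Lemma sinh_form_pos : 0 < 1 + c * (x - / x).
Proof.
  pose proof inv_lt_1; nra.
Qed.

Lemma upper_coef_pos : 0 < c + 1 / (4 * c).
Proof.
  assert (0 < 1 / (4 * c)) by (apply Rdiv_lt_0_compat; lra).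
  lra.
Qed.

Lemma sinh_form_gap :
  (c + 1 / (4 * c)) * x - (1 + c * (x - / x)) = (x - 2 * c) ^ 2 / (4 * c * x).
Proof.
  field; lra.
Qed.

Lemma ln_sinh_form_le : ln (1 + c * (x - / x)) <= ln (c + 1 / (4 * c)) + ln x.
Proof.
  assert (hgap : 0 <= (x - 2 * c) ^ 2 / (4 * c * x))
    by (apply Rmult_le_pos; [apply pow2_ge_0 | left; apply Rinv_0_lt_compat; nra]).
  rewrite <- ln_mult by (apply upper_coef_pos || lra).
  apply ln_le; [exact sinh_form_pos |].
  pose proof sinh_form_gap; lra.
Qed.

Lemma ln_sinh_form_eq_iff :
  ln (1 + c * (x - / x)) = ln (c + 1 / (4 * c)) + ln x <-> x = 2 * c.
Proof.
  rewrite <- ln_mult by (apply upper_coef_pos || lra).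
  split.
  - intros heq.
    apply ln_inv in heq; [| exact sinh_form_pos | pose proof upper_coef_pos; nra].
    assert (hsq : (x - 2 * c) ^ 2 / (4 * c * x) = 0) by (pose proof sinh_form_gap; lra).
    apply Rmult_integral in hsq as [hsq | hinv].
    + nra.
    + exfalso; revert hinv; apply Rinv_neq_0_compat; nra.
  - intros ->; f_equal; field; lra.
Qed.

Lemma ln_sinh_form_lt (t : R) :
  0 <= t -> ln (1 + c * (x - / x)) < ln (1 + c * t) + c * (x * x - 1).
Proof.
  intros ht.
  rewrite <- (ln_exp (c * (x * x - 1))), <- ln_mult by (apply exp_pos || nra).
  apply ln_increasing; [exact sinh_form_pos |].
  assert (hgap : x - / x < x * x - 1).
  { assert (0 < (x - 1) * (x - 1) * (x + 1) / x)
      by (apply Rdiv_lt_0_compat; [apply Rmult_lt_0_compat; nra | lra]).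
    replace (x * x - 1) with (x - / x + (x - 1) * (x - 1) * (x + 1) / x)
      by (field; lra).
    lra. }
  pose proof (exp_ineq1_le (c * (x * x - 1))).
  assert (0 <= c * t * exp (c * (x * x - 1)))
    by (apply Rmult_le_pos; [nra | left; apply exp_pos]).
  assert (c * (x - / x) < c * (x * x - 1)) by (apply Rmult_lt_compat_l; lra).
  nra.
Qed.

Lemma ln_sinh_form_gt_large (t : R) :
  1 <= c -> 0 <= t -> 1 + t <= x * x ->
  t / (t + 1) * ln c + ln x < ln (1 + c * (x - / x)).
Proof.
  intros hc1 ht htx.
  set (a := t / (t + 1)).
  assert (hat : a * (t + 1) = t) by (unfold a; field; lra).
  assert (ha : 0 <= a <= 1) by nra.
  assert (hm : 0 < a * c + 1 - a) by nra.
  apply Rle_lt_trans with (ln ((a * c + 1 - a) * x)).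
  { rewrite ln_mult by lra; pose proof (ln_concave_1 a c ha hc); lra. }
  apply ln_increasing; [nra |].
  assert (hkey : (t + 1) * x * ((1 + c * (x - / x)) - (a * c + 1 - a) * x)
                 = (c - 1) * (x * x - (t + 1)) + (t + 1) * (x - 1))
    by (unfold a; field; lra).
  assert (0 < (c - 1) * (x * x - (t + 1)) + (t + 1) * (x - 1)) by nra.
  assert (0 < (t + 1) * x) by nra.
  nra.
Qed.

Lemma ln_sinh_form_gt_small : c <= 1 -> c * ln x < ln (1 + c * (x - / x)).
Proof.
  intros hc1.
  apply Rle_lt_trans with (ln (c * x + 1 - c)).
  { apply ln_concave_1; lra. }
  pose proof inv_lt_1.
  apply ln_increasing; nra.
Qed.

End SinhForm.

Theorem lemma3p8 (c t : R) (hc : 0 < c) (ht : 0 < t) :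
  lfun c t < ln (1 + 2 * c * sinh (t / 2)) /\
  ln (1 + 2 * c * sinh (t / 2)) <= ufun c t /\
  (ln (1 + 2 * c * sinh (t / 2)) = ufun c t <-> (1 / 2 < c /\ t = 2 * ln (2 * c))).
Proof.
  rewrite <- exp_half_eq_iff by exact ht.
  set (x := exp (t / 2)).
  assert (hx : 1 < x) by (pose proof (exp_ineq1 (t / 2)); unfold x; lra).
  assert (hlnx : t / 2 = ln x) by (unfold x; rewrite ln_exp; reflexivity).
  assert (hexp : exp t = x * x) by (unfold x; rewrite <- exp_plus; f_equal; lra).
  assert (htx : 1 + t <= x * x) by (rewrite <- hexp; apply exp_ineq1_le).
  replace (1 + 2 * c * sinh (t / 2)) with (1 + c * (x - / x))
    by (unfold x; rewrite <- two_sinh_exp; ring).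
  pose proof (ln_sinh_form_le c x hc hx) as hle.
  pose proof (ln_sinh_form_lt c x hc hx t (Rlt_le _ _ ht)) as hlt.
  unfold lfun, ufun; rewrite hlnx, hexp.
  split; [| split].
  - destruct (Rle_dec 1 c) as [hc1 | hc1].
    + now apply ln_sinh_form_gt_large; lra.
    + replace (c * t / 2) with (c * ln x) by (rewrite <- hlnx; field).
      apply ln_sinh_form_gt_small; lra.
  - now apply Rmin_glb; lra.
  - rewrite eq_Rmin_l_iff by lra.
    apply ln_sinh_form_eq_iff; assumption.
Qed.
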